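(* Let $X$ be a nonnegative integer-valued random variable whose PGF $X(z)$ has radius of convergence $r>1$, with mean $\mu=X'(1)>0$ and variance $\sigma^2>0$, such that $|X(z)|<X(r_1)$ whenever $|z|=r_1$, $z\ne r_1$, $r_1\in(0,r)$. For positive integers $n,s$ let $A(z)=X(z)^n$, with $n\mu<s$ and degree of $X(z)$ larger than $s/n$, and let $Z_0$ be the zero of $z^s-A(z)$ of minimal modulus in $1<|z|<r$. Suppose $\frac{n\mu}{s}=1-\frac{\gamma}{\sqrt s}$ with $\gamma$ bounded away from $0$ and $\infty$ as $s\to\infty$. Then, as $s\to\infty$, $$\frac{1}{Z_0^{N+1}}=\exp\Big(\frac{-2L\gamma\mu}{\sigma^2}\Big)\big(1+O(s^{-1/2})\big)$$ whenever $N+1=L\sqrt{s}$ with $L>0$ bounded away from $0$ and $\infty$.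
   Context: $\sigma^2=X''(1)-X'(1)^2+X'(1)$. $Z_0$ is real and larger than $1$. $O$-terms refer to $s\to\infty$ with constants independent of $s$. *)

From Stdlib Require Import Reals.
From Coquelicot Require Import Coquelicot.
Open Scope R_scope.

(* A nonnegative integer-valued random variable X is represented by its
   distribution p k = P(X = k).  Its PGF is X(z) = sum_k p k z^k. *)
Definition is_distribution (p : nat -> R) : Prop :=
  (forall k, 0 <= p k) /\ is_series p 1.

Definition pgf (p : nat -> R) (x : R) : R := PSeries p x.
Definition pgf_radius (p : nat -> R) : Rbar := CV_radius p.

(* Complex PGF X(z) = sum_k p k z^k, computed componentwise
   (real coefficients, so Re and Im are the series of Re/Im of the terms). *)
Definition pgfC (p : nat -> R) (z : C) : C :=
  (Series (fun k => p k * fst (Cpow z k)), Series (fun k => p k * snd (Cpow z k))).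

Definition pgf_mean (p : nat -> R) : R := Derive (pgf p) 1.
Definition pgf_var (p : nat -> R) : R :=
  Derive_n (pgf p) 2 1 - (pgf_mean p) ^ 2 + pgf_mean p.

Definition pgf_degree_gt (p : nat -> R) (d : R) : Prop :=
  exists k : nat, p k <> 0 /\ d < INR k.

Definition annulus_zero (p : nat -> R) (n s : nat) (z : C) : Prop :=
  1 < Cmod z /\ Rbar_lt (Cmod z) (pgf_radius p) /\
  Cpow z s = Cpow (pgfC p z) n.

(* With F(t) = X(e^t) and s/n = mu + beta, a real z = e^t > 1 solves z^s = X(z)^n iff
   F(t) = e^((mu+beta) t).  Taylor's formula gives
   F(t) - e^((mu+beta) t) = - beta t + sigma^2 t^2 / 2 + O(beta t^2 + t^3),
   which is negative on (0, 2 beta/sigma^2 - kappa beta^2] and positive at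
   2 beta/sigma^2 + kappa beta^2.  Off the positive axis aperiodicity gives
   |X(z)| < X(|z|), so a zero Z0 of minimal modulus is real, and by the intermediate
   value theorem t0 = ln Z0 lies within kappa beta^2 of 2 beta/sigma^2.  As
   beta = mu gamma/sqrt s + O(1/s), this gives (N+1) t0 = 2 L gamma mu/sigma^2 + O(s^(-1/2)),
   and |e^x - 1| <= |x| e^|x| turns it into the relative error bound. *)

From Stdlib Require Import Reals Lra Psatz Classical.
From Coquelicot Require Import Coquelicot.
Open Scope R_scope.

Lemma exp_le_mono (x y : R) : x <= y -> exp x <= exp y.
Proof. intros [Hlt| <-]; [left; apply exp_increasing, Hlt| right; reflexivity]. Qed.

Lemma exp_pow (x : R) (k : nat) : exp x ^ k = exp (INR k * x).
Proof.
  induction k as [|k IH]; [simpl; rewrite Rmult_0_l, exp_0; reflexivity|].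
  rewrite S_INR; simpl; rewrite IH, <- exp_plus; f_equal; ring.
Qed.

Lemma pow_lt_mono_l (a b : R) (n : nat) : 0 <= a < b -> (0 < n)%nat -> a ^ n < b ^ n.
Proof.
  intros Hab Hn; destruct n as [|n]; [lia|]; clear Hn.
  induction n as [|n IH]; [simpl; lra|].
  change (a * a ^ S n < b * b ^ S n).
  assert (0 <= a ^ S n) by (apply pow_le; lra).
  nra.
Qed.

Lemma pow_lt_reg_l (a b : R) (n : nat) : 0 <= b -> a ^ n < b ^ n -> a < b.
Proof.
  intros Hb H; destruct (Rlt_le_dec a b) as [Hab|Hba]; [exact Hab|].
  pose proof (pow_incr b a n (conj Hb Hba)); lra.
Qed.

Lemma pow_le_reg_l (a b : R) (n : nat) :
  0 <= b -> (0 < n)%nat -> a ^ n <= b ^ n -> a <= b.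
Proof.
  intros Hb Hn H; destruct (Rle_lt_dec a b) as [Hab|Hba]; [exact Hab|].
  pose proof (pow_lt_mono_l b a n (conj Hb Hba) Hn); lra.
Qed.

Lemma Rabs_exp_sub1_le (x : R) : Rabs (exp x - 1) <= Rabs x * exp (Rabs x).
Proof.
  pose proof (exp_ineq1_le x); pose proof (exp_ineq1_le (- x)); pose proof (exp_pos x).
  assert (Hinv : exp x * exp (- x) = 1)
    by (rewrite <- exp_plus, Rplus_opp_r; apply exp_0).
  destruct (Rle_lt_dec 0 x) as [Hx|Hx].
  - rewrite (Rabs_pos_eq x), Rabs_pos_eq by lra; nra.
  - assert (exp x < 1) by (rewrite <- exp_0; apply exp_increasing, Hx).
    rewrite (Rabs_left x), Rabs_left by lra; nra.
Qed.

Lemma exp_close (x e d K : R) :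
  Rabs (x - e) <= d -> d <= K -> Rabs (exp x - exp e) <= exp e * (d * exp K).
Proof.
  intros Hd HK.
  replace (exp x - exp e) with (exp e * (exp (x - e) - 1))
    by (rewrite Rmult_minus_distr_l, <- exp_plus; f_equal; [f_equal|]; ring).
  rewrite Rabs_mult, (Rabs_pos_eq (exp e)) by (left; apply exp_pos).
  apply Rmult_le_compat_l; [left; apply exp_pos|].
  eapply Rle_trans; [apply Rabs_exp_sub1_le|].
  apply Rmult_le_compat; [apply Rabs_pos| left; apply exp_pos| exact Hd|].
  apply exp_le_mono; lra.
Qed.

Lemma exp_rescaled_error (m h t c L Lmax K : R) :
  0 < h <= 1 -> L = m * h -> 0 <= L <= Lmax ->
  Rabs (t - c * h) <= K * h ^ 2 ->
  Rabs (exp (- (m * t)) - exp (- (L * c)))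
    <= Lmax * K * exp (Lmax * K) * exp (- (L * c)) * h.
Proof.
  intros Hh HL HLb Ht.
  assert (Hm : 0 <= m) by nra.
  assert (HK : 0 <= K).
  { pose proof (Rabs_pos (t - c * h)); assert (0 < h ^ 2) by (apply pow_lt; lra); nra. }
  eapply Rle_trans;
    [apply exp_close with (d := Lmax * K * h) (K := Lmax * K)| right; ring].
  - replace (- (m * t) - - (L * c)) with (- m * (t - c * h)) by (rewrite HL; ring).
    rewrite Rabs_mult, Rabs_Ropp, (Rabs_pos_eq m) by exact Hm.
    apply Rle_trans with (m * (K * h ^ 2)); [apply Rmult_le_compat_l; lra|].
    replace (m * (K * h ^ 2)) with (L * K * h) by (rewrite HL; ring).
    apply Rmult_le_compat_r; [lra|]; apply Rmult_le_compat_r; lra.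
  - assert (0 <= Lmax * K) by nra; nra.
Qed.

Lemma taylor_order2_bound (f : R -> R) (x y M : R) : x <= y ->
  (forall t, x <= t <= y -> forall k, (k <= 3)%nat -> ex_derive_n f k t) ->
  (forall t, x <= t <= y -> Rabs (Derive_n f 3 t) <= M) ->
  Rabs (f y - f x - (y - x) * Derive_n f 1 x - (y - x) ^ 2 / 2 * Derive_n f 2 x)
    <= M / 6 * (y - x) ^ 3.
Proof.
  intros [Hxy| <-] Hdf HM.
  - destruct (Taylor_Lagrange f 2 x y Hxy Hdf) as [z [Hz ->]].
    simpl sum_f_R0; change (Derive_n f 0 x) with (f x); simpl Factorial.fact.
    match goal with |- Rabs ?e <= _ =>
      replace e with ((y - x) ^ 3 / 6 * Derive_n f 3 z) by (simpl; field) end.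
    rewrite Rabs_mult, Rabs_pos_eq by (apply Rmult_le_pos; [apply pow_le|]; lra).
    assert (0 <= (y - x) ^ 3) by (apply pow_le; lra).
    assert (Rabs (Derive_n f 3 z) <= M) by (apply HM; lra).
    nra.
  - match goal with |- Rabs ?e <= ?r => replace e with 0 by field; replace r with 0 by field end.
    rewrite Rabs_R0; lra.
Qed.

Lemma exp_taylor_order2_bound (Y y : R) : 0 <= y <= Y ->
  Rabs (exp y - 1 - y - y ^ 2 / 2) <= exp Y / 6 * y ^ 3.
Proof.
  intros Hy.
  assert (Dn_exp : forall k t, Derive_n exp k t = exp t)
    by (intros; apply is_derive_n_unique, is_derive_n_exp).
  pose proof (taylor_order2_bound exp 0 y (exp Y) (proj1 Hy)) as H.
  rewrite !Dn_exp, exp_0, Rminus_0_r, !Rmult_1_r in H.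
  apply H.
  - intros t _ [|k] _; [exact I|].
    apply ex_derive_ext with exp; [intros; symmetry; apply Dn_exp|].
    apply ex_derive_Reals_1, derivable_pt_exp.
  - intros t Ht; rewrite Dn_exp, Rabs_pos_eq by (left; apply exp_pos).
    apply exp_le_mono; lra.
Qed.

(** * Generating functions near 1 *)

Lemma Series_zero : Series (fun _ => 0) = 0.
Proof.
  rewrite (Series_ext _ (fun _ => 0 * 0)) by (intros; ring).
  rewrite Series_scal_l; ring.
Qed.

Lemma Rabs_lt_CV_radius (a : nat -> R) (x y : R) :
  0 <= x <= y -> Rbar_lt y (CV_radius a) -> Rbar_lt (Rabs x) (CV_radius a).
Proof.
  intros Hx Hy; rewrite Rabs_pos_eq by lra.
  apply Rbar_le_lt_trans with y; [simpl; lra| exact Hy].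
Qed.

Lemma PSeries_nonneg_le (a : nat -> R) (x y : R) : (forall k, 0 <= a k) ->
  0 <= x <= y -> Rbar_lt y (CV_radius a) -> 0 <= PSeries a x <= PSeries a y.
Proof.
  intros Ha Hxy Hy.
  assert (Hterm : forall t k, 0 <= t -> 0 <= a k * t ^ k)
    by (intros; apply Rmult_le_pos; [apply Ha| apply pow_le; lra]).
  assert (Hex : forall t, 0 <= t <= y -> ex_series (fun k => a k * t ^ k)).
  { intros t Ht.
    apply ex_series_ext with (fun k => Rabs (a k * t ^ k)).
    - intros k; apply Rabs_pos_eq, Hterm; lra.
    - apply CV_disk_inside, (Rabs_lt_CV_radius a t y Ht Hy). }
  unfold PSeries; split.
  - rewrite <- Series_zero.
    apply Series_le; [intros k; split; [lra| apply Hterm; lra]| apply Hex; lra].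
  - apply Series_le; [|apply Hex; lra].
    intros k; split; [apply Hterm; lra|].
    apply Rmult_le_compat_l; [apply Ha| apply pow_incr; lra].
Qed.

Lemma PS_derive_n_nonneg (a : nat -> R) (n : nat) :
  (forall k, 0 <= a k) -> forall k, 0 <= PS_derive_n n a k.
Proof.
  intros Ha k; unfold PS_derive_n.
  apply Rmult_le_pos; [apply Rmult_le_pos|apply Ha]; [apply pos_INR|].
  left; apply Rinv_0_lt_compat, lt_0_INR, Factorial.lt_O_fact.
Qed.

Lemma CV_radius_gap (a : nat -> R) : Rbar_lt 1 (CV_radius a) ->
  exists d, 0 < d <= 1 /\ Rbar_lt (1 + d) (CV_radius a).
Proof.
  destruct (CV_radius a) as [r| |]; simpl; intros H; [|exists 1; split; [lra|exact I]|contradiction].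
  exists (Rmin 1 ((r - 1) / 2)); pose proof (Rmin_r 1 ((r - 1) / 2)).
  split; [split; [apply Rmin_glb_lt|apply Rmin_l]|]; lra.
Qed.

Lemma pgf_at_1 (p : nat -> R) : is_distribution p -> pgf p 1 = 1.
Proof.
  intros [_ Hsum]; unfold pgf, PSeries.
  rewrite (Series_ext _ p) by (intros; rewrite pow1; ring).
  apply is_series_unique, Hsum.
Qed.

Lemma pgf_ge_1 (p : nat -> R) (x : R) : is_distribution p ->
  1 <= x -> Rbar_lt x (pgf_radius p) -> 1 <= pgf p x.
Proof.
  intros Hd Hx Hr; rewrite <- (pgf_at_1 p Hd).
  apply (PSeries_nonneg_le p 1 x); [apply Hd| lra| exact Hr].
Qed.

Lemma pgfC_RtoC (p : nat -> R) (x : R) : pgfC p (RtoC x) = RtoC (pgf p x).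
Proof.
  unfold pgfC.
  rewrite (Series_ext (fun k => p k * fst (Cpow (RtoC x) k)) (fun k => p k * x ^ k))
    by (intros k; rewrite <- RtoC_pow; reflexivity).
  rewrite (Series_ext (fun k => p k * snd (Cpow (RtoC x) k)) (fun _ => 0))
    by (intros k; rewrite <- RtoC_pow; simpl; ring).
  rewrite Series_zero; reflexivity.
Qed.

Lemma pgf_taylor_at_1 (p : nat -> R) : is_distribution p -> Rbar_lt 1 (pgf_radius p) ->
  exists d M, 0 < d <= 1 /\ Rbar_lt (1 + d) (pgf_radius p) /\ 0 <= M /\
    forall u, 0 <= u <= d ->
      Rabs (pgf p (1 + u) - 1 - u * pgf_mean p - u ^ 2 / 2 * Derive_n (pgf p) 2 1)
        <= M * u ^ 3.
Proof.
  intros Hd Hr; unfold pgf_radius in *.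
  destruct (CV_radius_gap p Hr) as [d [Hd1 Hd2]].
  set (M3 := PSeries (PS_derive_n 3 p) (1 + d)).
  assert (HM3 : forall t, 0 <= t <= 1 + d -> 0 <= PSeries (PS_derive_n 3 p) t <= M3).
  { intros t Ht; apply PSeries_nonneg_le; [apply PS_derive_n_nonneg, Hd| exact Ht|].
    rewrite CV_radius_derive_n; exact Hd2. }
  exists d, (M3 / 6); split; [exact Hd1|split; [exact Hd2|split]].
  { pose proof (HM3 0 ltac:(lra)); lra. }
  intros u Hu.
  pose proof (taylor_order2_bound (pgf p) 1 (1 + u) M3 ltac:(lra)) as H.
  rewrite pgf_at_1 in H by exact Hd; replace (1 + u - 1) with u in H by ring.
  apply H; intros t Ht; unfold pgf.
  - intros k _; apply ex_derive_n_PSeries, (Rabs_lt_CV_radius p t (1 + d)); [lra| exact Hd2].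
  - rewrite Derive_n_PSeries by (apply (Rabs_lt_CV_radius p t (1 + d)); [lra| exact Hd2]).
    pose proof (HM3 t ltac:(lra)); rewrite Rabs_pos_eq; lra.
Qed.

Lemma expm1_bounds (t : R) : 0 <= t <= 1 ->
  Rabs (exp t - 1 - t - t ^ 2 / 2) <= t ^ 3 / 2 /\ t <= exp t - 1 <= t + t ^ 2 /\ t + t ^ 2 <= 2 * t.
Proof.
  intros Ht.
  assert (He : Rabs (exp t - 1 - t - t ^ 2 / 2) <= t ^ 3 / 2).
  { eapply Rle_trans; [apply (exp_taylor_order2_bound 1 t Ht)|].
    pose proof exp_le_3; assert (0 <= t ^ 3) by (apply pow_le; lra); nra. }
  split; [exact He|].
  apply Rabs_le_between in He.
  assert (t ^ 3 <= t ^ 2 <= t) by (simpl; split; nra).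
  assert (0 <= t ^ 2) by (simpl; nra).
  lra.
Qed.

Lemma taylor_order2_comp_exp (G : R -> R) (a b d M : R) :
  0 < d <= 1 -> 0 <= M ->
  (forall u, 0 <= u <= d -> Rabs (G (1 + u) - 1 - u * a - u ^ 2 / 2 * b) <= M * u ^ 3) ->
  forall t, 0 <= t <= d / 2 ->
    Rabs (G (exp t) - 1 - a * t - (a + b) / 2 * t ^ 2)
      <= (8 * M + Rabs a / 2 + 3 * Rabs b / 2) * t ^ 3.
Proof.
  intros Hd HM HG t Ht.
  destruct (expm1_bounds t ltac:(lra)) as [He Hu].
  set (u := exp t - 1) in *.
  specialize (HG u ltac:(lra)); replace (1 + u) with (exp t) in HG by (unfold u; ring).
  (* u = e^t - 1 = t + t^2/2 + O(t^3): re-expand the expansion of G at 1 in powers of t *)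
  replace (G (exp t) - 1 - a * t - (a + b) / 2 * t ^ 2) with
    ((G (exp t) - 1 - u * a - u ^ 2 / 2 * b) + a * (u - t - t ^ 2 / 2)
       + b / 2 * ((u - t) * (u + t))) by (unfold u; field).
  assert (Hu3 : u ^ 3 <= 8 * t ^ 3)
    by (replace (8 * t ^ 3) with ((2 * t) ^ 3) by ring; apply pow_incr; lra).
  assert (Hw : 0 <= (u - t) * (u + t) <= 3 * t ^ 3).
  { split; [nra|]. replace (3 * t ^ 3) with (t ^ 2 * (3 * t)) by ring.
    apply Rmult_le_compat; lra. }
  assert (Hba : Rabs (b / 2 * ((u - t) * (u + t))) = Rabs b / 2 * ((u - t) * (u + t))).
  { rewrite Rabs_mult, (Rabs_pos_eq ((u - t) * (u + t))) by lra.
    unfold Rdiv; rewrite Rabs_mult, (Rabs_pos_eq (/ 2)) by lra; ring. }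
  eapply Rle_trans; [apply Rabs_triang|].
  eapply Rle_trans; [apply Rplus_le_compat_r, Rabs_triang|].
  rewrite Hba, Rabs_mult.
  assert (0 <= t ^ 3) by (apply pow_le; lra).
  pose proof (Rabs_pos a); pose proof (Rabs_pos b).
  assert (Rabs a * Rabs (u - t - t ^ 2 / 2) <= Rabs a * (t ^ 3 / 2))
    by (apply Rmult_le_compat_l; lra).
  assert (Rabs b / 2 * ((u - t) * (u + t)) <= Rabs b / 2 * (3 * t ^ 3))
    by (apply Rmult_le_compat_l; lra).
  nra.
Qed.

Lemma pgf_exp_taylor (p : nat -> R) : is_distribution p -> Rbar_lt 1 (pgf_radius p) ->
  exists tau C0, 0 < tau <= 1 / 2 /\ Rbar_lt (exp tau) (pgf_radius p) /\ 0 <= C0 /\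
    forall t, 0 <= t <= tau ->
      Rabs (pgf p (exp t) - 1 - pgf_mean p * t - (pgf_var p + pgf_mean p ^ 2) / 2 * t ^ 2)
        <= C0 * t ^ 3.
Proof.
  intros Hd Hr.
  destruct (pgf_taylor_at_1 p Hd Hr) as [d [M [Hd1 [Hd2 [HM HX]]]]].
  exists (d / 2), (8 * M + Rabs (pgf_mean p) / 2 + 3 * Rabs (Derive_n (pgf p) 2 1) / 2).
  split; [lra|split; [|split]].
  - apply Rbar_le_lt_trans with (1 + d); [simpl|exact Hd2].
    destruct (expm1_bounds (d / 2) ltac:(lra)); lra.
  - pose proof (Rabs_pos (pgf_mean p)); pose proof (Rabs_pos (Derive_n (pgf p) 2 1)); lra.
  - intros t Ht.
    replace (pgf_var p + pgf_mean p ^ 2) with (pgf_mean p + Derive_n (pgf p) 2 1)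
      by (unfold pgf_var; ring).
    exact (taylor_order2_comp_exp (pgf p) _ _ d M Hd1 HM HX t Ht).
Qed.

(** * Real zeros and the minimal zero *)

Section Gap.

Variables (F : R -> R) (mu s2 tau C0 : R).
Hypothesis Hmu : 0 < mu.
Hypothesis Hs2 : 0 < s2.
Hypothesis HC0 : 0 <= C0.
Hypothesis Htau : 0 < tau <= 1 / 2.
Hypothesis HF : forall t, 0 <= t <= tau ->
  Rabs (F t - 1 - mu * t - (s2 + mu ^ 2) / 2 * t ^ 2) <= C0 * t ^ 3.

Definition gap (beta t : R) : R := F t - exp ((mu + beta) * t).

Definition gap_cubic : R := C0 + 2 * mu ^ 3 * exp mu.
Definition gap_quad : R := 16 * gap_cubic / s2 ^ 2 + 8 * mu / s2.
Definition kappa : R := 2 * gap_quad / s2 + 1.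
Definition beta_max : R := Rmin mu (Rmin (tau * s2 / 4) (1 / (kappa * s2))).

(* root_lo and root_hi bracket 2 beta / s2, the positive root of the quadratic part
   - beta t + s2 t^2 / 2 of gap beta. *)
Definition root_lo (beta : R) : R := 2 * beta / s2 - kappa * beta ^ 2.
Definition root_hi (beta : R) : R := 2 * beta / s2 + kappa * beta ^ 2.

Lemma gap_cubic_nonneg : 0 <= gap_cubic.
Proof.
  unfold gap_cubic; pose proof (exp_pos mu).
  assert (0 <= mu ^ 3) by (apply pow_le; lra); nra.
Qed.

Lemma gap_quad_nonneg : 0 <= gap_quad.
Proof.
  pose proof gap_cubic_nonneg.
  assert (0 < s2 ^ 2) by (apply pow_lt, Hs2).
  unfold gap_quad; apply Rplus_le_le_0_compat; apply Rdiv_le_0_compat; lra.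
Qed.

Lemma kappa_ge_1 : 1 <= kappa.
Proof.
  pose proof gap_quad_nonneg.
  assert (0 <= 2 * gap_quad / s2) by (apply Rdiv_le_0_compat; lra).
  unfold kappa; lra.
Qed.

Lemma beta_max_pos : 0 < beta_max.
Proof.
  pose proof kappa_ge_1.
  apply Rmin_glb_lt; [exact Hmu|apply Rmin_glb_lt]; [nra|].
  apply Rdiv_lt_0_compat; nra.
Qed.

Lemma gap_expansion (beta t : R) : 0 < beta <= mu -> 0 <= t <= tau ->
  Rabs (gap beta t - (- beta * t + s2 / 2 * t ^ 2))
    <= gap_cubic * t ^ 3 + 2 * mu * beta * t ^ 2.
Proof.
  intros Hb Ht; unfold gap, gap_cubic.
  set (a := mu + beta).
  pose proof (exp_taylor_order2_bound mu (a * t) ltac:(unfold a; nra)) as He.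
  replace (F t - exp (a * t) - (- beta * t + s2 / 2 * t ^ 2)) with
    ((F t - 1 - mu * t - (s2 + mu ^ 2) / 2 * t ^ 2)
       - (exp (a * t) - 1 - a * t - (a * t) ^ 2 / 2)
       - beta * (2 * mu + beta) / 2 * t ^ 2) by (unfold a; field).
  assert (Hexp : exp mu / 6 * (a * t) ^ 3 <= 2 * mu ^ 3 * exp mu * t ^ 3).
  { assert (Hat : (a * t) ^ 3 <= 8 * (mu ^ 3 * t ^ 3)).
    { replace (8 * (mu ^ 3 * t ^ 3)) with ((2 * mu * t) ^ 3) by ring.
      apply pow_incr; unfold a; nra. }
    assert (0 <= mu ^ 3 * t ^ 3) by (apply Rmult_le_pos; apply pow_le; lra).
    pose proof (exp_pos mu).
    apply Rmult_le_compat_l with (r := exp mu / 6) in Hat; nra. }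
  assert (Hq : 0 <= beta * (2 * mu + beta) / 2 * t ^ 2 <= 2 * mu * beta * t ^ 2).
  { assert (0 <= t ^ 2) by (apply pow_le; lra); split; nra. }
  specialize (HF t Ht).
  eapply Rle_trans; [apply Rabs_triang|].
  rewrite Rabs_Ropp, (Rabs_pos_eq (beta * (2 * mu + beta) / 2 * t ^ 2)) by lra.
  eapply Rle_trans; [apply Rplus_le_compat_r, Rabs_triang|].
  rewrite Rabs_Ropp; lra.
Qed.

Section Small_beta.

Variable beta : R.
Hypothesis Hbeta : 0 < beta <= beta_max.

Lemma small_beta_facts :
  beta <= mu /\ 4 * beta / s2 <= tau /\ 0 < kappa * beta ^ 2 <= beta / s2.
Proof.
  pose proof kappa_ge_1.
  assert (H1 : beta <= mu) by (eapply Rle_trans; [apply Hbeta| apply Rmin_l]).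
  assert (H2 : beta <= tau * s2 / 4)
    by (eapply Rle_trans; [apply Hbeta| eapply Rle_trans; [apply Rmin_r| apply Rmin_l]]).
  assert (H3 : beta <= 1 / (kappa * s2))
    by (eapply Rle_trans; [apply Hbeta| eapply Rle_trans; [apply Rmin_r| apply Rmin_r]]).
  assert (Hkb : kappa * beta * s2 <= 1).
  { apply Rmult_le_compat_l with (r := kappa * s2) in H3; [|nra].
    replace (kappa * s2 * (1 / (kappa * s2))) with 1 in H3 by (field; nra); nra. }
  split; [exact H1|split].
  - apply Rmult_le_reg_r with s2; [exact Hs2|].
    replace (4 * beta / s2 * s2) with (4 * beta) by (field; lra); lra.
  - split; [apply Rmult_lt_0_compat; [lra| apply pow_lt; lra]|].
    apply Rmult_le_reg_r with s2; [exact Hs2|].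
    replace (beta / s2 * s2) with beta by (field; lra); simpl; nra.
Qed.

Lemma gap_near_parabola (t : R) : 0 < t <= 4 * beta / s2 ->
  Rabs (gap beta t - (- beta * t + s2 / 2 * t ^ 2)) <= t * beta ^ 2 * gap_quad.
Proof.
  intros Ht.
  destruct small_beta_facts as [Hb_mu [Hb_tau _]].
  eapply Rle_trans; [apply gap_expansion; lra|].
  assert (Ht2 : t ^ 2 <= (4 * beta / s2) ^ 2) by (apply pow_incr; lra).
  pose proof gap_cubic_nonneg.
  (* both error terms are O(t beta^2) because t <= 4 beta / s2 *)
  assert (E1 : gap_cubic * t ^ 3 <= t * beta ^ 2 * (16 * gap_cubic / s2 ^ 2)).
  { replace (t * beta ^ 2 * (16 * gap_cubic / s2 ^ 2))
      with (gap_cubic * t * (4 * beta / s2) ^ 2) by (field; lra).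
    replace (gap_cubic * t ^ 3) with (gap_cubic * t * t ^ 2) by ring.
    apply Rmult_le_compat_l; [nra| exact Ht2]. }
  assert (E2 : 2 * mu * beta * t ^ 2 <= t * beta ^ 2 * (8 * mu / s2)).
  { replace (t * beta ^ 2 * (8 * mu / s2))
      with (2 * mu * beta * t * (4 * beta / s2)) by (field; lra).
    replace (2 * mu * beta * t ^ 2) with (2 * mu * beta * t * t) by ring.
    apply Rmult_le_compat_l; [|lra]; repeat apply Rmult_le_pos; lra. }
  unfold gap_quad; lra.
Qed.

Lemma root_bracket : 0 < root_lo beta < root_hi beta /\ root_hi beta <= tau.
Proof.
  destruct small_beta_facts as [_ [Hb_tau Hkb]].
  assert (2 * beta / s2 = 2 * (beta / s2)) by (field; lra).
  assert (4 * beta / s2 = 4 * (beta / s2)) by (field; lra).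
  unfold root_lo, root_hi; lra.
Qed.

Lemma gap_neg_below (t : R) : 0 < t <= root_lo beta -> gap beta t < 0.
Proof.
  intros Ht.
  destruct small_beta_facts as [_ [Hb_tau Hkb]]; destruct root_bracket as [_ Hhi].
  assert (Hnear : Rabs (gap beta t - (- beta * t + s2 / 2 * t ^ 2)) <= t * beta ^ 2 * gap_quad)
    by (apply gap_near_parabola; unfold root_lo, root_hi in *; lra).
  apply Rabs_le_between in Hnear.
  assert (Hlo : s2 / 2 * root_lo beta = beta - beta ^ 2 * gap_quad - beta ^ 2 * s2 / 2)
    by (unfold root_lo, kappa; field; lra).
  assert (s2 / 2 * t <= s2 / 2 * root_lo beta) by (apply Rmult_le_compat_l; lra).
  assert (0 < t * (beta ^ 2 * s2 / 2)).
  { apply Rmult_lt_0_compat; [lra|].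
    assert (0 < beta ^ 2) by (apply pow_lt; lra); apply Rdiv_lt_0_compat; nra. }
  simpl in *; nra.
Qed.

Lemma gap_pos_at_root_hi : 0 < gap beta (root_hi beta).
Proof.
  destruct small_beta_facts as [_ [Hb_tau Hkb]]; destruct root_bracket as [[Hlo0 Hlohi] Hhi].
  set (t := root_hi beta) in *.
  assert (Hnear : Rabs (gap beta t - (- beta * t + s2 / 2 * t ^ 2)) <= t * beta ^ 2 * gap_quad)
    by (apply gap_near_parabola; unfold t, root_hi; split; [lra|];
        assert (4 * beta / s2 = 2 * beta / s2 + 2 * (beta / s2)) by (field; lra); lra).
  apply Rabs_le_between in Hnear.
  assert (Hq : - beta + s2 / 2 * t - beta ^ 2 * gap_quad = beta ^ 2 * s2 / 2)
    by (unfold t, root_hi, kappa; field; lra).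
  assert (0 < t * (beta ^ 2 * s2 / 2)).
  { apply Rmult_lt_0_compat; [lra|].
    assert (0 < beta ^ 2) by (apply pow_lt; lra); apply Rdiv_lt_0_compat; nra. }
  simpl in *; nra.
Qed.

End Small_beta.

End Gap.

Lemma beta_bounds (mu gamma h beta : R) :
  0 < mu -> 0 < gamma -> 0 < h -> 2 * gamma * h <= 1 ->
  beta * (1 - gamma * h) = mu * gamma * h ->
  0 < beta <= 2 * mu * gamma * h /\ 0 <= beta - mu * gamma * h <= 2 * mu * gamma ^ 2 * h ^ 2.
Proof.
  intros Hmu Hg Hh Hgh Hrel.
  assert (Hgh0 : 0 < gamma * h) by nra.
  assert (Hb : 0 < beta) by nra.
  assert (Hb2 : beta <= 2 * mu * gamma * h) by nra.
  split; [lra|].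
  replace (beta - mu * gamma * h) with (beta * (gamma * h)) by lra.
  split; [nra|].
  replace (2 * mu * gamma ^ 2 * h ^ 2) with ((2 * mu * gamma * h) * (gamma * h)) by ring.
  apply Rmult_le_compat_r; lra.
Qed.

Lemma log_root_estimate (k s2 mu gamma ghi h beta t0 : R) :
  0 < s2 -> 0 <= k -> 0 < mu -> 0 < gamma <= ghi -> 0 < h ->
  0 < beta <= 2 * mu * gamma * h ->
  0 <= beta - mu * gamma * h <= 2 * mu * gamma ^ 2 * h ^ 2 ->
  Rabs (t0 - 2 * beta / s2) <= k * beta ^ 2 ->
  Rabs (t0 - 2 * mu * gamma / s2 * h) <= (4 * k * mu ^ 2 * ghi ^ 2 + 4 * mu * ghi ^ 2 / s2) * h ^ 2.
Proof.
  intros Hs2 Hk Hmu Hg Hh Hb Hdev Ht0.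
  replace (t0 - 2 * mu * gamma / s2 * h)
    with ((t0 - 2 * beta / s2) + 2 / s2 * (beta - mu * gamma * h)) by (field; lra).
  eapply Rle_trans; [apply Rabs_triang|].
  rewrite Rabs_mult, (Rabs_pos_eq (2 / s2)), (Rabs_pos_eq (beta - _))
    by (lra || (apply Rdiv_le_0_compat; lra)).
  assert (Hbeta2 : k * beta ^ 2 <= 4 * k * mu ^ 2 * ghi ^ 2 * h ^ 2).
  { replace (4 * k * mu ^ 2 * ghi ^ 2 * h ^ 2) with (k * (2 * mu * ghi * h) ^ 2) by ring.
    apply Rmult_le_compat_l; [exact Hk| apply pow_incr; nra]. }
  assert (Hdev2 : 2 / s2 * (beta - mu * gamma * h) <= 4 * mu * ghi ^ 2 / s2 * h ^ 2).
  { replace (4 * mu * ghi ^ 2 / s2 * h ^ 2) with (2 / s2 * (2 * mu * ghi ^ 2 * h ^ 2))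
      by (field; lra).
    apply Rmult_le_compat_l; [apply Rdiv_le_0_compat; lra|].
    assert (gamma ^ 2 <= ghi ^ 2) by (apply pow_incr; lra).
    assert (0 <= 2 * mu * h ^ 2) by (assert (0 <= h ^ 2) by (apply pow_le; lra); nra).
    nra. }
  lra.
Qed.

Lemma eventually_inv_sqrt_le (c d : R) : 0 < d ->
  exists S0 : nat, forall s : nat, (S0 <= s)%nat -> c * / sqrt (INR s) <= d.
Proof.
  intros Hd; destruct (INR_archimed 1 ((c / d) ^ 2) Rlt_0_1) as [S0 HS0].
  exists S0; intros s Hs.
  assert (Hss : (c / d) ^ 2 < INR s) by (pose proof (le_INR _ _ Hs); lra).
  assert (Hq : 0 < sqrt (INR s))
    by (apply sqrt_lt_R0; pose proof (pow2_ge_0 (c / d)); lra).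
  assert (Hcd : c / d < sqrt (INR s))
    by (apply (pow_lt_reg_l _ _ 2); [lra| rewrite pow2_sqrt; [|apply pos_INR]; lra]).
  apply Rmult_le_reg_r with (sqrt (INR s)); [exact Hq|].
  rewrite Rmult_assoc, Rinv_l, Rmult_1_r by lra.
  apply Rmult_lt_compat_l with (r := d) in Hcd; [|exact Hd].
  replace (d * (c / d)) with c in Hcd by (field; lra); lra.
Qed.

Lemma Cmod_inv_pow_exp_sub (t e : R) (k : nat) :
  Cmod (Cminus (Cinv (Cpow (RtoC (exp t)) k)) (RtoC e)) = Rabs (exp (- (INR k * t)) - e).
Proof.
  rewrite <- RtoC_pow, <- RtoC_inv by (apply pow_nonzero; pose proof (exp_pos t); lra).
  rewrite <- RtoC_minus, Cmod_R, exp_pow, exp_Ropp; reflexivity.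
Qed.

Section Minimal_zero.

Variable p : nat -> R.
Hypothesis Hdist : is_distribution p.
Hypothesis Haper : forall (r1 : R) (z : C),
  0 < r1 -> Rbar_lt r1 (pgf_radius p) -> Cmod z = r1 -> z <> RtoC r1 ->
  Cmod (pgfC p z) < pgf p r1.

Section Fixed_exponents.

Variables (n s : nat) (alpha : R).
Hypothesis Hn : (1 <= n)%nat.
Hypothesis Halpha : INR n * alpha = INR s.

Lemma annulus_zero_of_real (t : R) : 0 < t -> Rbar_lt (exp t) (pgf_radius p) ->
  pgf p (exp t) = exp (alpha * t) -> annulus_zero p n s (RtoC (exp t)).
Proof.
  intros Ht Hr He.
  unfold annulus_zero; rewrite Cmod_R, Rabs_pos_eq by (left; apply exp_pos).
  split; [rewrite <- exp_0; apply exp_increasing, Ht| split; [exact Hr|]].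
  rewrite pgfC_RtoC, <- !RtoC_pow, He, !exp_pow, <- Halpha.
  do 2 f_equal; ring.
Qed.

(* Z^s = X(Z)^n forces |X(Z)| = |Z|^(s/n), while aperiodicity gives |X(Z)| < X(|Z|)
   off the positive axis. *)
Lemma annulus_zero_modulus (Z : C) (t : R) : annulus_zero p n s Z -> Cmod Z = exp t ->
  exp (alpha * t) <= pgf p (exp t) /\
  (Z <> RtoC (exp t) -> exp (alpha * t) < pgf p (exp t)).
Proof.
  intros [H1 [H2 H3]] Ht; rewrite Ht in H1, H2.
  assert (Hpow : exp (alpha * t) ^ n = Cmod (pgfC p Z) ^ n).
  { rewrite exp_pow, <- Cmod_pow, <- H3, Cmod_pow, Ht, exp_pow, <- Halpha.
    f_equal; ring. }
  assert (Hge1 : 1 <= pgf p (exp t)) by (apply pgf_ge_1; [exact Hdist| lra| exact H2]).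
  assert (Hn0 : (0 < n)%nat) by lia.
  assert (Hstrict : Z <> RtoC (exp t) -> exp (alpha * t) < pgf p (exp t)).
  { intros Hne; apply (pow_lt_reg_l _ _ n); [lra|].
    rewrite Hpow; apply pow_lt_mono_l; [|exact Hn0].
    split; [apply Cmod_ge_0| apply Haper; [lra| exact H2| exact Ht| exact Hne]]. }
  split; [|exact Hstrict].
  destruct (classic (Z = RtoC (exp t))) as [HZ|Hne]; [|left; apply Hstrict, Hne].
  rewrite HZ, pgfC_RtoC, Cmod_R, Rabs_pos_eq in Hpow by lra.
  apply (pow_le_reg_l _ _ n); [lra| exact Hn0| right; exact Hpow].
Qed.

Lemma annulus_zero_of_sign_change (tau t1 t2 : R) :
  Rbar_lt (exp tau) (pgf_radius p) -> 0 < t1 < t2 -> t2 <= tau ->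
  pgf p (exp t1) < exp (alpha * t1) -> exp (alpha * t2) < pgf p (exp t2) ->
  exists z, annulus_zero p n s z /\ Cmod z < exp t2.
Proof.
  intros Hr Ht Ht2 Hlo Hhi.
  assert (Hrad : forall t, t <= tau -> Rbar_lt (exp t) (pgf_radius p))
    by (intros t Htt; apply Rbar_le_lt_trans with (exp tau); [apply exp_le_mono, Htt| exact Hr]).
  destruct (Ranalysis5.IVT_interv (fun t => pgf p (exp t) - exp (alpha * t)) t1 t2)
    as [z [Hz Hz0]]; [| lra| lra| lra|].
  - intros x Hx; apply continuity_pt_minus.
    + apply (continuity_pt_comp exp (pgf p));
        [apply derivable_continuous_pt, derivable_pt_exp|].
      apply PSeries_continuity, (Rabs_lt_CV_radius p (exp x) (exp x));
        [pose proof (exp_pos x); lra| apply Hrad; lra].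
    + apply (continuity_pt_comp (fun t => alpha * t) exp);
        [|apply derivable_continuous_pt, derivable_pt_exp].
      apply continuity_pt_mult; [apply continuity_pt_const; intros ? ?; reflexivity|].
      apply continuity_pt_id.
  - assert (Hzt : z < t2) by (destruct (Req_dec z t2) as [->|]; lra).
    exists (RtoC (exp z)); split.
    + apply annulus_zero_of_real; [lra| apply Hrad; lra| lra].
    + rewrite Cmod_R, Rabs_pos_eq by (left; apply exp_pos); apply exp_increasing, Hzt.
Qed.

Lemma minimal_annulus_zero_bracket (tau tlo thi : R) (Z0 : C) :
  Rbar_lt (exp tau) (pgf_radius p) -> 0 < tlo < thi -> thi <= tau ->
  (forall t, 0 < t <= tlo -> pgf p (exp t) < exp (alpha * t)) ->
  exp (alpha * thi) < pgf p (exp thi) ->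
  annulus_zero p n s Z0 -> (forall z, annulus_zero p n s z -> Cmod Z0 <= Cmod z) ->
  exists t0, Z0 = RtoC (exp t0) /\ tlo < t0 <= thi.
Proof.
  intros Hr Ht Hthi Hneg Hpos HZ0 Hmin.
  set (t0 := ln (Cmod Z0)).
  assert (Hexp : Cmod Z0 = exp t0) by (symmetry; apply exp_ln; destruct HZ0; lra).
  assert (Ht0 : 0 < t0)
    by (rewrite <- ln_1; apply ln_increasing; [lra| apply HZ0]).
  destruct (annulus_zero_modulus Z0 t0 HZ0 Hexp) as [Hge Hgt].
  assert (Hlo : tlo < t0).
  { destruct (Rlt_le_dec tlo t0) as [H|H]; [exact H|].
    specialize (Hneg t0 (conj Ht0 H)); lra. }
  assert (Hsmaller : forall t2, tlo < t2 <= tau -> exp (alpha * t2) < pgf p (exp t2) ->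
                       t0 < t2).
  { intros t2 Ht2 Hpos2.
    destruct (annulus_zero_of_sign_change tau tlo t2 Hr ltac:(lra) ltac:(lra)
                (Hneg tlo ltac:(lra)) Hpos2) as [z [Hz Hzlt]].
    specialize (Hmin z Hz); apply exp_lt_inv; lra. }
  exists t0; split; [|split; [exact Hlo|]].
  - destruct (classic (Z0 = RtoC (exp t0))) as [HZ|Hne]; [exact HZ|].
    destruct (Rle_lt_dec t0 tau) as [Htau0|Htau0].
    + specialize (Hsmaller t0 ltac:(lra) (Hgt Hne)); lra.
    + specialize (Hsmaller thi ltac:(lra) Hpos); lra.
  - left; apply Hsmaller; [lra| exact Hpos].
Qed.

End Fixed_exponents.

Hypothesis Hmu : 0 < pgf_mean p.
Hypothesis Hsig : 0 < pgf_var p.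
Variables tau C0 : R.
Hypothesis HC0 : 0 <= C0.
Hypothesis Htau : 0 < tau <= 1 / 2.
Hypothesis Htau_rad : Rbar_lt (exp tau) (pgf_radius p).
Hypothesis HF : forall t, 0 <= t <= tau ->
  Rabs (pgf p (exp t) - 1 - pgf_mean p * t - (pgf_var p + pgf_mean p ^ 2) / 2 * t ^ 2)
    <= C0 * t ^ 3.

Local Notation mu := (pgf_mean p).
Local Notation s2 := (pgf_var p).

Lemma minimal_zero_log_expansion (n s : nat) (gamma ghi : R) (Z0 : C) :
  (1 <= n)%nat -> (1 <= s)%nat ->
  gamma = sqrt (INR s) * (1 - INR n * mu / INR s) -> 0 < gamma <= ghi ->
  2 * ghi * / sqrt (INR s) <= 1 ->
  2 * mu * ghi * / sqrt (INR s) <= beta_max mu s2 tau C0 ->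
  annulus_zero p n s Z0 -> (forall z, annulus_zero p n s z -> Cmod Z0 <= Cmod z) ->
  exists t0, Z0 = RtoC (exp t0) /\
    Rabs (t0 - 2 * mu * gamma / s2 * / sqrt (INR s))
      <= (4 * kappa mu s2 C0 * mu ^ 2 * ghi ^ 2 + 4 * mu * ghi ^ 2 / s2) * (/ sqrt (INR s)) ^ 2.
Proof.
  intros Hn Hs Hgamma_def Hgamma Hsmall1 Hsmall2 HZ0 Hmin.
  assert (Hq : 0 < sqrt (INR s)) by (apply sqrt_lt_R0, lt_0_INR; lia).
  set (h := / sqrt (INR s)) in *.
  assert (Hh : 0 < h) by (apply Rinv_0_lt_compat, Hq).
  assert (Hn0 : 0 < INR n) by (apply lt_0_INR; lia).
  assert (Hs0 : 0 < INR s) by (apply lt_0_INR; lia).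
  (* with s / n = mu + beta, the real zeros e^t solve X(e^t) = e^((mu + beta) t) *)
  set (beta := INR s / INR n - mu).
  assert (Halpha : INR n * (mu + beta) = INR s) by (unfold beta; field; lra).
  assert (Hrel : beta * (1 - gamma * h) = mu * gamma * h)
    by (rewrite Hgamma_def; unfold beta, h; field; lra).
  destruct (beta_bounds mu gamma h beta Hmu ltac:(lra) Hh ltac:(nra) Hrel) as [Hbeta Hdev].
  assert (Hbeta_max : 0 < beta <= beta_max mu s2 tau C0) by nra.
  destruct (root_bracket mu s2 tau C0 Hmu Hsig HC0 Htau beta Hbeta_max) as [Hlohi Hhi].
  destruct (minimal_annulus_zero_bracket n s (mu + beta) Hn Halpha
              tau _ _ Z0 Htau_rad Hlohi Hhi) as [t0 [HZ Ht0]]; [| |exact HZ0|exact Hmin|].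
  - intros t Ht.
    pose proof (gap_neg_below (fun t => pgf p (exp t)) mu s2 tau C0
                  Hmu Hsig HC0 Htau HF beta Hbeta_max t Ht).
    unfold gap in *; lra.
  - pose proof (gap_pos_at_root_hi (fun t => pgf p (exp t)) mu s2 tau C0
                  Hmu Hsig HC0 Htau HF beta Hbeta_max).
    unfold gap in *; lra.
  - exists t0; split; [exact HZ|].
    apply (log_root_estimate _ _ _ _ _ _ beta); try lra.
    + pose proof (kappa_ge_1 mu s2 C0 Hmu Hsig HC0); lra.
    + apply Rabs_le; unfold root_lo, root_hi in Ht0; lra.
Qed.

End Minimal_zero.

Theorem proposition3p2 (p : nat -> R)
  (Hdist : is_distribution p)
  (Hrad : Rbar_lt 1 (pgf_radius p))
  (Hmu : 0 < pgf_mean p)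
  (Hsig : 0 < pgf_var p)
  (Haper : forall (r1 : R) (z : C),
      0 < r1 -> Rbar_lt r1 (pgf_radius p) ->
      Cmod z = r1 -> z <> RtoC r1 ->
      Cmod (pgfC p z) < pgf p r1)
  (glo ghi Llo Lhi : R)
  (Hg : 0 < glo <= ghi) (HL : 0 < Llo <= Lhi) :
  exists (K : R) (S0 : nat),
    forall (s n N : nat) (Z0 : C),
      (S0 <= s)%nat -> (1 <= n)%nat -> (1 <= s)%nat ->
      INR n * pgf_mean p < INR s ->
      pgf_degree_gt p (INR s / INR n) ->
      annulus_zero p n s Z0 ->
      (forall z : C, annulus_zero p n s z -> Cmod Z0 <= Cmod z) ->
      let gamma := sqrt (INR s) * (1 - INR n * pgf_mean p / INR s) in
      let L := INR (N + 1) / sqrt (INR s) in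
      glo <= gamma <= ghi ->
      Llo <= L <= Lhi ->
      Cmod (Cminus (Cinv (Cpow Z0 (N + 1)))
                   (RtoC (exp (- 2 * L * gamma * pgf_mean p / pgf_var p))))
        <= K * exp (- 2 * L * gamma * pgf_mean p / pgf_var p) / sqrt (INR s).
Proof.
  destruct (pgf_exp_taylor p Hdist Hrad) as [tau [C0 [Htau [Htau_rad [HC0 HF]]]]].
  pose proof (beta_max_pos _ _ tau C0 Hmu Hsig HC0 Htau) as Hbmax.
  destruct (eventually_inv_sqrt_le (2 * ghi) 1 Rlt_0_1) as [S1 HS1].
  destruct (eventually_inv_sqrt_le (2 * pgf_mean p * ghi) _ Hbmax) as [S2 HS2].
  set (K1 := 4 * kappa (pgf_mean p) (pgf_var p) C0 * pgf_mean p ^ 2 * ghi ^ 2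
             + 4 * pgf_mean p * ghi ^ 2 / pgf_var p).
  exists (Lhi * K1 * exp (Lhi * K1)), (Nat.max S1 S2).
  (* n mu < s follows from gamma > 0, and deg X > s/n only serves to make Z0 exist. *)
  intros s n N Z0 Hlarge Hn Hs _ _ HZ0 Hmin gamma L Hgamma HLrange.
  destruct (minimal_zero_log_expansion p Hdist Haper Hmu Hsig tau C0 HC0 Htau Htau_rad HF
              n s gamma ghi Z0 Hn Hs eq_refl ltac:(lra) (HS1 s ltac:(lia)) (HS2 s ltac:(lia))
              HZ0 Hmin) as [t0 [-> Ht0]].
  rewrite Cmod_inv_pow_exp_sub.
  replace (- 2 * L * gamma * pgf_mean p / pgf_var p)
    with (- (L * (2 * pgf_mean p * gamma / pgf_var p))) by (field; lra).
  assert (Hq : 1 <= sqrt (INR s)) by (rewrite <- sqrt_1; apply sqrt_le_1_alt, (le_INR 1), Hs).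
  unfold Rdiv at 3; apply exp_rescaled_error; [| reflexivity| lra| exact Ht0].
  split; [apply Rinv_0_lt_compat; lra|].
  rewrite <- Rinv_1; apply Rinv_le_contravar; lra.
Qed.
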